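(* Let $(M,\cdot)$ be a moving semigroup and $A\subseteq M$. Then $A$ is DIP if and only if there is a nonprincipal idempotent ultrafilter $\mathcal{U}$ on $M$ with $A\in\mathcal{U}$.
   Context: $\beta M$ is the Stone–Čech compactification of the discrete semigroup $M$ (the space of ultrafilters on $M$, with principal ultrafilters identified with elements of $M$), equipped with the usual extension of the semigroup operation. $(M,\cdot)$ is moving if $\beta M\setminus M$ is a subsemigroup of $\beta M$. An ultrafilter $\mathcal{U}$ is idempotent if $\mathcal{U}\cdot\mathcal{U}=\mathcal{U}$ in $\beta M$. For a sequence $(x_n)$ in $M$, $\mathrm{FP}(x_n)=\{x_{i_1}\cdots x_{i_k}: k\ge1,\ i_1<\cdots<i_k\}$. A set $A\subseteq M$ is DIP (distinctly IP) if there is an injective sequence $(x_n)$ in $M$ with $\mathrm{FP}(x_n)\subseteq A$. *)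

From Stdlib Require Import List Sorted Arith.
Import ListNotations.

Set Implicit Arguments.

Section Defs.
Variable M : Type.

Definition is_ultrafilter (U : (M -> Prop) -> Prop) : Prop :=
  U (fun _ => True) /\
  ~ U (fun _ => False) /\
  (forall A B : M -> Prop, U A -> (forall x, A x -> B x) -> U B) /\
  (forall A B : M -> Prop, U A -> U B -> U (fun x => A x /\ B x)) /\
  (forall A : M -> Prop, U A \/ U (fun x => ~ A x)).

Definition principal_uf (a : M) : (M -> Prop) -> Prop := fun A => A a.

(* U is principal (i.e. is an element of M inside beta M) *)
Definition is_principal (U : (M -> Prop) -> Prop) : Prop :=
  exists a : M, U = principal_uf a.

Variable op : M -> M -> M.

Definition associative : Prop :=
  forall x y z, op x (op y z) = op (op x y) z.

(* Extension of the operation to beta M (Hindman--Strauss convention):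
   A in p.q  iff  { x | { y | x y in A } in q } in p. *)
Definition uf_mul (p q : (M -> Prop) -> Prop) : (M -> Prop) -> Prop :=
  fun A => p (fun x => q (fun y => A (op x y))).

(* (M,op) is moving: beta M \ M is a subsemigroup of beta M *)
Definition moving : Prop :=
  forall p q, is_ultrafilter p -> is_ultrafilter q ->
    ~ is_principal p -> ~ is_principal q -> ~ is_principal (uf_mul p q).

Definition idempotent_uf (U : (M -> Prop) -> Prop) : Prop :=
  uf_mul U U = U.

Definition list_prod (x : nat -> M) (i : nat) (l : list nat) : M :=
  fold_left (fun acc j => op acc (x j)) l (x i).

Definition FP (x : nat -> M) : M -> Prop :=
  fun y => exists (i : nat) (l : list nat),
    Sorted lt (i :: l) /\ y = list_prod x i l.

Definition DIP (A : M -> Prop) : Prop :=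
  exists x : nat -> M, (forall n m, x n = x m -> n = m) /\
    (forall y, FP x y -> A y).

End Defs.

From Pilot Require Import Defs.
From mathcomp Require classical_sets.
From Stdlib Require Import List Sorted Arith Lia Classical ClassicalEpsilon
  FunctionalExtensionality PropExtensionality.
Import ListNotations.

Set Implicit Arguments.
Unset Strict Implicit.

(* Closed subsets of beta M are represented by filters: a filter F stands for
   the set of ultrafilters refining it.

   If FP(x_n) is contained in A with x injective, the ultrafilters that contain
   every tail FP(x_n)_(n >= k) and avoid every finite set form a nonempty closed
   set; it is a subsemigroup because M is moving and a product of tails contains
   a tail.  By the Ellis-Numakura lemma it contains an idempotent, which then
   contains A.  For Ellis-Numakura, Zorn's lemma applied to filters gives a
   minimal closed subsemigroup X; for p in X, the closed subsemigroups Xp and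
   {q in X | qp = p} must both be X, whence pp = p.

   Conversely, for a nonprincipal idempotent U containing A, the Galvin-Glazer
   construction picks distinct x_n in C_n* with C_0 = A and
   C_(n+1) = C_n* /\ x_n^-1 C_n*, where C* = {y in C | y^-1 C in U} lies in U by
   idempotence; every finite product with least index n then lies in C_n. *)

Lemma union_absorb (T : Type) (X Y : T -> Prop) :
  (forall t, X t -> Y t) -> (fun t => X t \/ Y t) = Y.
Proof.
  intros XY. apply functional_extensionality; intro t.
  apply propositional_extensionality. split; [intros [h|h]; auto | auto].
Qed.

Lemma zorn_above (T : Type) (P : (T -> Prop) -> Prop) (X0 : T -> Prop) :
  (forall C : (T -> Prop) -> Prop, (forall X, C X -> P X) -> (exists X, C X) ->
     (forall X Y, C X -> C Y -> (forall t, X t -> Y t) \/ (forall t, Y t -> X t)) ->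
     P (fun t => exists2 X, C X & X t)) ->
  P X0 ->
  exists X, P X /\ (forall t, X0 t -> X t) /\
    forall Y, P Y -> (forall t, X t -> Y t) -> forall t, Y t -> X t.
Proof.
  intros Hchain HX0.
  (* Zorn_bigcup also covers the empty chain, so we maximise [G] with [X0 \/ G] in [P]. *)
  set (P' := fun G : T -> Prop => P (fun t => X0 t \/ G t)).
  destruct (@classical_sets.Zorn_bigcup T P') as [A [PA HA]].
  - intros F FP Ftot.
    set (C := fun X => X = X0 \/ exists2 G, F G & X = (fun t => X0 t \/ G t)).
    assert (E : (fun t => exists2 X, C X & X t) =
                (fun t => X0 t \/ exists2 G, F G & G t)).
    { apply functional_extensionality; intro t. apply propositional_extensionality.
      split.
      - intros [X [e|[G FG e]] Xt]; subst X; [now left|].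
        destruct Xt as [h|h]; [now left|right; now exists G].
      - intros [h|[G FG Gt]]; [exists X0; [now left|exact h]|].
        exists (fun t => X0 t \/ G t); [right; now exists G | now right]. }
    unfold P'. change (P (fun t => X0 t \/ exists2 G, F G & G t)). rewrite <- E.
    apply Hchain.
    + intros X [e|[G FG e]]; subst X; [exact HX0 | exact (FP G FG)].
    + exists X0; now left.
    + intros X Y [e|[G FG e]] [e'|[G' FG' e']]; subst X Y;
        try (left; intros t h; solve [auto | now left]).
      * right; intros t h; now left.
      * destruct (Ftot G G' FG FG') as [s|s]; [left|right]; intros t [h|h]; auto.
  - exists (fun t => X0 t \/ A t). split; [exact PA|split; [now left|]].
    intros Y PY XY t Yt. apply NNPP; intro nXt.
    apply (HA Y).
    + unfold classical_sets.proper, classical_sets.subset.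
      split; [intros s As; apply XY; now right|].
      intro YA. apply nXt; right; exact (YA t Yt).
    + unfold P'. rewrite union_absorb; [exact PY|]. intros s h; apply XY; now left.
Qed.

Definition set_system (M : Type) := (M -> Prop) -> Prop.

Section Filters.
Variable M : Type.

Definition is_filter (F : set_system M) : Prop :=
  F (fun _ => True) /\ ~ F (fun _ => False) /\
  (forall A B, F A -> (forall x, A x -> B x) -> F B) /\
  (forall A B, F A -> F B -> F (fun x => A x /\ B x)).

Definition refines (F G : set_system M) : Prop := forall A, F A -> G A.

Definition meet (X : set_system M -> Prop) : set_system M :=
  fun A => forall p, X p -> p A.

Section Ultrafilter.
Variable U : set_system M.
Hypothesis HU : is_ultrafilter U.

Lemma uf_full : U (fun _ => True).
Proof. apply HU. Qed.

Lemma uf_mono A B : U A -> (forall x, A x -> B x) -> U B.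
Proof. apply HU. Qed.

Lemma uf_and A B : U A -> U B -> U (fun x => A x /\ B x).
Proof. apply HU. Qed.

Lemma uf_nonempty A : U A -> exists x, A x.
Proof.
  intros HA. apply NNPP; intro N. apply (proj1 (proj2 HU)).
  apply (uf_mono HA). intros x Ax; apply N; now exists x.
Qed.

Lemma uf_not_compl A : U A -> ~ U (fun x => ~ A x).
Proof.
  intros HA HnA. destruct (uf_nonempty (uf_and HA HnA)) as [x [h1 h2]]. auto.
Qed.

Lemma uf_compl A : ~ U A -> U (fun x => ~ A x).
Proof. intros nA. destruct (proj2 (proj2 (proj2 (proj2 HU))) A); tauto. Qed.

Lemma uf_singleton_principal a : U (fun y => y = a) -> U = principal_uf a.
Proof.
  intros Ha. apply functional_extensionality; intro A.
  apply propositional_extensionality; unfold principal_uf; split.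
  - intros HA. destruct (uf_nonempty (uf_and Ha HA)) as [y [-> h]]; exact h.
  - intros Aa. apply (uf_mono Ha). now intros y ->.
Qed.

Lemma uf_avoid_list B L : ~ is_principal U -> U B -> U (fun y => B y /\ ~ In y L).
Proof.
  intros Hnp HB. induction L as [|a L IH].
  - apply (uf_mono HB). simpl; auto.
  - assert (Ha : U (fun y => y <> a)).
    { apply NNPP; intro N. apply Hnp. exists a. apply uf_singleton_principal.
      apply (uf_mono (uf_compl N)). intros y h. now apply NNPP. }
    apply (uf_mono (uf_and IH Ha)). intros y [[h1 h2] h3]. simpl; intuition.
Qed.

End Ultrafilter.

Lemma uf_meet_meets (U : set_system M) (X : set_system M -> Prop) A :
  is_ultrafilter U -> (forall p, X p -> is_ultrafilter p) -> refines (meet X) U -> U A ->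
  exists p, X p /\ p A.
Proof.
  intros HU XU HX HA. apply NNPP; intro N. apply (uf_not_compl HU HA), HX.
  intros p Xp. apply (uf_compl (XU p Xp)). intro pA. apply N; now exists p.
Qed.

Lemma uf_refines_eq p q : is_ultrafilter p -> is_ultrafilter q -> refines p q -> p = q.
Proof.
  intros Hp Hq pq. apply functional_extensionality; intro A.
  apply propositional_extensionality; split; [apply pq|].
  intro qA. apply NNPP; intro npA. exact (uf_not_compl Hq qA (pq _ (uf_compl Hp npA))).
Qed.

Lemma meet_filter (X : set_system M -> Prop) :
  (forall p, X p -> is_ultrafilter p) -> (exists p, X p) -> is_filter (meet X).
Proof.
  intros XU [p0 Xp0]. repeat split.
  - intros p Xp. exact (uf_full (XU p Xp)).
  - intros H. destruct (uf_nonempty (XU p0 Xp0) (H p0 Xp0)) as [_ []].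
  - intros A B HA AB p Xp. exact (uf_mono (XU p Xp) (HA p Xp) AB).
  - intros A B HA HB p Xp. exact (uf_and (XU p Xp) (HA p Xp) (HB p Xp)).
Qed.

Definition filter_join (F G : set_system M) : set_system M :=
  fun B => exists C D, F C /\ G D /\ forall x, C x -> D x -> B x.

Lemma filter_join_filter (F G : set_system M) :
  is_filter F -> G (fun _ => True) ->
  (forall A B, G A -> G B -> G (fun x => A x /\ B x)) ->
  (forall C D, F C -> G D -> exists x, C x /\ D x) ->
  is_filter (filter_join F G).
Proof.
  intros (F1 & _ & F3 & F4) G1 G4 Hmeet. repeat split.
  - exists (fun _ => True), (fun _ => True); auto.
  - intros (C & D & FC & GD & h). destruct (Hmeet C D FC GD) as [x [Cx Dx]].
    exact (h x Cx Dx).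
  - intros A B (C & D & FC & GD & h) AB. exists C, D; auto.
  - intros A B (C & D & FC & GD & h) (C' & D' & FC' & GD' & h').
    exists (fun x => C x /\ C' x), (fun x => D x /\ D' x).
    split; [auto|split; [auto|]]. intros x [] []; auto.
Qed.

Lemma filter_join_l (F G : set_system M) :
  G (fun _ => True) -> refines F (filter_join F G).
Proof. intros G1 C FC. exists C, (fun _ => True); auto. Qed.

Lemma filter_join_r (F G : set_system M) :
  F (fun _ => True) -> refines G (filter_join F G).
Proof. intros F1 D GD. exists (fun _ => True), D; auto. Qed.

Lemma filter_chain_union (C : set_system M -> Prop) :
  (forall F, C F -> is_filter F) -> (exists F, C F) ->
  (forall F G, C F -> C G -> refines F G \/ refines G F) ->
  is_filter (fun A => exists2 F, C F & F A).
Proof.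
  intros CF [F0 CF0] Ctot. repeat split.
  - exists F0; [exact CF0 | apply (CF F0 CF0)].
  - intros [F CF' HF]. destruct (CF F CF') as (_ & F2 & _). exact (F2 HF).
  - intros A B [F CF' HF] AB. destruct (CF F CF') as (_ & _ & F3 & _).
    exists F; [exact CF' | exact (F3 A B HF AB)].
  - intros A B [F CFF HA] [G CFG HB].
    destruct (Ctot F G CFF CFG) as [FG|GF].
    + exists G; [exact CFG | apply (CF G CFG); auto].
    + exists F; [exact CFF | apply (CF F CFF); auto].
Qed.

Lemma maximal_filter_ultrafilter (F : set_system M) :
  is_filter F -> (forall G, is_filter G -> refines F G -> refines G F) ->
  is_ultrafilter F.
Proof.
  intros HF Hmax. pose proof HF as (F1 & F2 & F3 & F4).
  repeat split; auto. intro A.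
  destruct (classic (exists C, F C /\ forall x, C x -> ~ A x)) as [[C [FC HC]]|N].
  - right. exact (F3 C _ FC HC).
  - left. set (PA := fun B : M -> Prop => forall x, A x -> B x).
    apply (Hmax (filter_join F PA)).
    + apply filter_join_filter; [exact HF | now intros x _ | |].
      * intros B B' h h' x Ax; split; auto.
      * intros C D FC PD. apply NNPP; intro N'. apply N. exists C; split; [exact FC|].
        intros x Cx Ax. apply N'. exists x; split; auto.
    + apply filter_join_l. now intros x _.
    + apply filter_join_r; [exact F1|]. now intros x.
Qed.

Lemma ultrafilter_refining (F : set_system M) :
  is_filter F -> exists p, is_ultrafilter p /\ refines F p.
Proof.
  intros HF. destruct (@zorn_above (M -> Prop) is_filter F) as (G & HG & FG & Gmax).
  - intros C CF Cne Ctot. exact (filter_chain_union CF Cne Ctot).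
  - exact HF.
  - exists G. split; [exact (maximal_filter_ultrafilter HG Gmax) | exact FG].
Qed.

End Filters.

Section EllisNumakura.
Variables (M : Type) (op : M -> M -> M).

Lemma uf_mul_ultrafilter p q :
  is_ultrafilter p -> is_ultrafilter q -> is_ultrafilter (uf_mul op p q).
Proof.
  intros Hp Hq. unfold uf_mul. repeat split.
  - apply (uf_mono Hp (uf_full Hp)). intros; apply (uf_full Hq).
  - intro H. destruct (uf_nonempty Hp H) as [x hx].
    destruct (uf_nonempty Hq hx) as [y []].
  - intros A B HA AB. apply (uf_mono Hp HA). intros x hx. exact (uf_mono Hq hx (fun y => AB _)).
  - intros A B HA HB. apply (uf_mono Hp (uf_and Hp HA HB)). intros x [h1 h2].
    exact (uf_and Hq h1 h2).
  - intro A. destruct (classic (p (fun x => q (fun y => A (op x y))))) as [h|h]; [now left|right].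
    apply (uf_mono Hp (uf_compl Hp h)). intros x hx. exact (uf_compl Hq hx).
Qed.

Hypothesis Hassoc : associative op.

Lemma uf_mul_assoc p q r : uf_mul op (uf_mul op p q) r = uf_mul op p (uf_mul op q r).
Proof.
  unfold uf_mul. apply functional_extensionality; intro A.
  do 2 f_equal. apply functional_extensionality; intro x. do 2 f_equal.
  apply functional_extensionality; intro y. do 2 f_equal.
  apply functional_extensionality; intro z. now rewrite Hassoc.
Qed.

Definition ultra_above (F : set_system M) (p : set_system M) : Prop :=
  is_ultrafilter p /\ refines F p.

(* [meet X] is the filter of the closure of [X] in beta M. *)
Definition closed_set (X : set_system M -> Prop) : Prop :=
  forall r, is_ultrafilter r -> refines (meet X) r -> X r.

Definition semigroup_filter (F : set_system M) : Prop :=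
  is_filter F /\
  forall p q, ultra_above F p -> ultra_above F q -> ultra_above F (uf_mul op p q).

Lemma maximal_semigroup_filter F0 :
  semigroup_filter F0 ->
  exists F, semigroup_filter F /\ refines F0 F /\
    forall G, semigroup_filter G -> refines F G -> refines G F.
Proof.
  intros HF0. apply (@zorn_above (M -> Prop) semigroup_filter F0); [|exact HF0].
  intros C CS Cne Ctot.
  split; [apply filter_chain_union; [intros F CF; apply (CS F CF)|exact Cne|exact Ctot]|].
  intros p q [Hp pC] [Hq qC]. split; [exact (uf_mul_ultrafilter Hp Hq)|].
  intros A [F CF FA].
  apply (proj2 (CS F CF) p q); [split; [exact Hp|] | split; [exact Hq|] | exact FA];
    intros B FB; [apply pC | apply qC]; now exists F.
Qed.

Section MaximalSemigroupFilter.
Variable F : set_system M.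
Hypothesis Fmax : forall G, semigroup_filter G -> refines F G -> refines G F.

Lemma closed_subsemigroup_full (X : set_system M -> Prop) :
  (forall p, X p -> ultra_above F p) -> closed_set X -> (exists p, X p) ->
  (forall p q, X p -> X q -> X (uf_mul op p q)) ->
  forall p, ultra_above F p -> X p.
Proof.
  intros XF Xcl Xne Xmul.
  assert (XU : forall p, X p -> is_ultrafilter p) by (intros p Xp; apply (XF p Xp)).
  assert (HX : semigroup_filter (meet X)).
  { split; [exact (meet_filter XU Xne)|].
    intros r s [Hr rX] [Hs sX]. split; [exact (uf_mul_ultrafilter Hr Hs)|].
    intros A HA. apply HA, Xmul; [apply Xcl|apply Xcl]; auto. }
  assert (FX : refines F (meet X)) by (intros A FA p Xp; exact (proj2 (XF p Xp) A FA)).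
  intros p [Hp Fp]. apply Xcl; [exact Hp|]. intros A HA. exact (Fp A (Fmax HX FX HA)).
Qed.

End MaximalSemigroupFilter.

Lemma right_translates_closed F p :
  is_filter F -> is_ultrafilter p ->
  closed_set (fun r => exists q, ultra_above F q /\ r = uf_mul op q p).
Proof.
  intros HF Hp r Hr Hcl.
  set (H := fun B : M -> Prop => exists2 A, r A & forall x, p (fun y => A (op x y)) -> B x).
  assert (XU : forall s, (exists q, ultra_above F q /\ s = uf_mul op q p) -> is_ultrafilter s).
  { intros s [q [[Hq _] ->]]. exact (uf_mul_ultrafilter Hq Hp). }
  assert (HJ : is_filter (filter_join F H)).
  { apply filter_join_filter; [exact HF| | |].
    - exists (fun _ => True); [exact (uf_full Hr)|auto].
    - intros B B' [A rA hA] [A' rA' hA']. exists (fun y => A y /\ A' y); [exact (uf_and Hr rA rA')|].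
      intros x hx. split; [apply hA|apply hA']; apply (uf_mono Hp hx); now intros y [].
    - intros C D FC [A rA hA].
      destruct (uf_meet_meets Hr XU Hcl rA) as [s [[q [[Hq Fq] ->]] hs]].
      destruct (uf_nonempty Hq (uf_and Hq (Fq C FC) hs)) as [x [Cx hx]].
      exists x; split; [exact Cx|exact (hA x hx)]. }
  destruct (ultrafilter_refining HJ) as [q [Hq Jq]].
  exists q. split.
  - split; [exact Hq|]. intros C FC. apply Jq, filter_join_l; [|exact FC].
    exists (fun _ => True); [exact (uf_full Hr)|auto].
  - apply uf_refines_eq; [exact Hr|exact (uf_mul_ultrafilter Hq Hp)|].
    intros A rA. apply Jq, filter_join_r; [apply HF|]. exists A; auto.
Qed.

Lemma stabilizer_closed F p :
  is_ultrafilter p -> closed_set (fun s => ultra_above F s /\ uf_mul op s p = p).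
Proof.
  intros Hp r Hr Hcl.
  assert (XU : forall s, ultra_above F s /\ uf_mul op s p = p -> is_ultrafilter s)
    by (intros s [[Hs _] _]; exact Hs).
  split; [split; [exact Hr|]|].
  - intros A FA. apply Hcl. intros s [[_ Fs] _]. exact (Fs A FA).
  - symmetry. apply uf_refines_eq; [exact Hp|exact (uf_mul_ultrafilter Hr Hp)|].
    intros A pA. apply NNPP; intro N.
    destruct (uf_meet_meets Hr XU Hcl (uf_compl Hr N)) as [s [[[Hs _] Es] hs]].
    apply (uf_not_compl Hs (A := fun x => p (fun y => A (op x y))) ); [|exact hs].
    change (uf_mul op s p A). now rewrite Es.
Qed.

Theorem ellis_numakura F0 :
  semigroup_filter F0 -> exists p, ultra_above F0 p /\ idempotent_uf op p.
Proof.
  intros HF0.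
  destruct (maximal_semigroup_filter HF0) as (F & HF & F0F & Fmax).
  destruct (ultrafilter_refining (proj1 HF)) as [p [Hp Fp]].
  assert (pF : ultra_above F p) by (split; assumption).
  set (K := fun r => exists q, ultra_above F q /\ r = uf_mul op q p).
  assert (pK : K p).
  { apply (closed_subsemigroup_full Fmax); [| | now exists (uf_mul op p p), p | | exact pF].
    - intros r [q [qF ->]]. exact (proj2 HF q p qF pF).
    - exact (right_translates_closed (proj1 HF) Hp).
    - intros r s [q [qF ->]] [q' [q'F ->]]. exists (uf_mul op (uf_mul op q p) q').
      split; [apply (proj2 HF); [apply (proj2 HF)|]; assumption|].
      symmetry; apply uf_mul_assoc. }
  set (L := fun s => ultra_above F s /\ uf_mul op s p = p).
  assert (pL : L p).
  { apply (closed_subsemigroup_full Fmax); [| | | | exact pF].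
    - intros s []; assumption.
    - exact (stabilizer_closed Hp).
    - destruct pK as [q [qF Eq]]. exists q. now split.
    - intros r s [rF Er] [sF Es]. split; [exact (proj2 HF r s rF sF)|].
      now rewrite uf_mul_assoc, Es, Er. }
  exists p. split; [split; [exact Hp|intros A HA; exact (Fp A (F0F A HA))]|exact (proj2 pL)].
Qed.

End EllisNumakura.

Section FiniteProducts.
Variables (M : Type) (op : M -> M -> M) (x : nat -> M).

Definition FP_from (n : nat) : M -> Prop :=
  fun y => exists i l, n <= i /\ Sorted lt (i :: l) /\ y = Defs.list_prod op x i l.

Lemma FP_from_singleton n m : n <= m -> FP_from n (x m).
Proof. intros nm. exists m, []. repeat constructor. exact nm. Qed.

Lemma sorted_app i l j l' :
  Sorted lt (i :: l) -> (forall a, In a (i :: l) -> a < j) ->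
  Sorted lt (j :: l') -> Sorted lt (i :: l ++ j :: l').
Proof.
  revert i. induction l as [|k l IH]; intros i Hl Hj Hl'; simpl.
  - constructor; [exact Hl'|]. constructor. apply Hj; now left.
  - apply Sorted_inv in Hl as [Hl Hik]. constructor.
    + apply IH; [exact Hl| |exact Hl']. intros a ha. apply Hj; now right.
    + constructor. now inversion Hik.
Qed.

Lemma list_upper_bound (l : list nat) : exists k, forall a, In a l -> a <= k.
Proof.
  induction l as [|c l [k hk]]; [exists 0; intros a []|].
  exists (Nat.max c k). intros a [->|h]; [lia|]. specialize (hk a h); lia.
Qed.

Hypothesis Hassoc : associative op.

Lemma list_prod_app i l j l' :
  Defs.list_prod op x i (l ++ j :: l') = op (Defs.list_prod op x i l) (Defs.list_prod op x j l').
Proof.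
  unfold Defs.list_prod. rewrite fold_left_app. simpl.
  generalize (fold_left (fun acc k => op acc (x k)) l (x i)) (x j).
  induction l' as [|k l' IH]; intros a b; simpl; [reflexivity|].
  rewrite <- Hassoc. apply IH.
Qed.

Lemma FP_from_mul n y :
  FP_from n y -> exists k, forall z, FP_from k z -> FP_from n (op y z).
Proof.
  intros (i & l & ni & Hs & ->). destruct (list_upper_bound (i :: l)) as [k Hk].
  exists (S k). intros z (j & l' & kj & Hs' & ->).
  exists i, (l ++ j :: l'). split; [exact ni|split].
  - apply sorted_app; [exact Hs| |exact Hs']. intros a ha. specialize (Hk a ha). lia.
  - symmetry. apply list_prod_app.
Qed.

End FiniteProducts.

Section TailFilter.
Variables (M : Type) (op : M -> M -> M) (x : nat -> M).
Hypothesis Hinj : forall n m, x n = x m -> n = m.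

(* Tails of [FP(x_n)] with finitely many points removed: its ultrafilters are the
   nonprincipal ones containing every tail. *)
Definition tail_filter : set_system M :=
  fun B => exists n L, forall y, FP_from op x n y -> ~ In y L -> B y.

Lemma tail_filter_FP_from n : tail_filter (FP_from op x n).
Proof. exists n, []. auto. Qed.

Lemma injective_avoid_list (L : list M) n : exists m, n <= m /\ ~ In (x m) L.
Proof.
  revert n. induction L as [|a L IH]; intro n; [now exists n|].
  destruct (IH n) as [m [nm Hm]].
  destruct (classic (x m = a)) as [<-|ne].
  - destruct (IH (S m)) as [m' [mm' Hm']]. exists m'. split; [lia|].
    intros [e|h]; [apply Hinj in e; lia|exact (Hm' h)].
  - exists m. split; [exact nm|]. intros [e|h]; [exact (ne (eq_sym e))|exact (Hm h)].
Qed.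

Lemma tail_filter_filter : is_filter tail_filter.
Proof.
  repeat split.
  - exists 0, []. auto.
  - intros [n [L HL]]. destruct (injective_avoid_list L n) as [m [nm Hm]].
    exact (HL _ (FP_from_singleton op x nm) Hm).
  - intros A B [n [L HL]] AB. exists n, L. auto.
  - intros A B [n [L HL]] [n' [L' HL']]. exists (Nat.max n n'), (L ++ L').
    intros y (i & l & ni & Hs & ->) HyL.
    split; [apply HL|apply HL']; try (exists i, l; repeat split; auto; lia);
      intro h; apply HyL, in_or_app; auto.
Qed.

Lemma tail_filter_nonprincipal p : refines tail_filter p -> ~ is_principal p.
Proof.
  intros Fp [a ->]. apply (Fp (fun y => y <> a)); [|reflexivity].
  exists 0, [a]. intros y _ h e. apply h; now left.
Qed.

Lemma tail_filter_semigroup :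
  associative op -> moving op -> semigroup_filter op tail_filter.
Proof.
  intros Hassoc Hmov. split; [exact tail_filter_filter|].
  intros p q [Hp Fp] [Hq Fq].
  pose proof (uf_mul_ultrafilter op Hp Hq) as Hpq. split; [exact Hpq|].
  intros B [n [L HB]].
  assert (Hnp : ~ is_principal (uf_mul op p q))
    by (apply Hmov; auto using tail_filter_nonprincipal).
  assert (HFP : uf_mul op p q (FP_from op x n)).
  { apply (uf_mono Hp (Fp _ (tail_filter_FP_from n))). intros y Hy.
    destruct (FP_from_mul Hassoc Hy) as [k Hk].
    exact (uf_mono Hq (Fq _ (tail_filter_FP_from k)) Hk). }
  apply (uf_mono Hpq (uf_avoid_list Hpq L Hnp HFP)).
  intros y [h1 h2]. exact (HB y h1 h2).
Qed.

End TailFilter.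

Lemma DIP_idempotent_ultrafilter (M : Type) (op : M -> M -> M) (A : M -> Prop) :
  associative op -> moving op -> DIP op A ->
  exists U, is_ultrafilter U /\ ~ is_principal U /\ idempotent_uf op U /\ U A.
Proof.
  intros Hassoc Hmov [x [Hinj HA]].
  destruct (ellis_numakura Hassoc (tail_filter_semigroup Hinj Hassoc Hmov))
    as [p [[Hp Fp] Hidem]].
  exists p. split; [exact Hp|split; [exact (tail_filter_nonprincipal Fp)|split; [exact Hidem|]]].
  apply (uf_mono Hp (Fp _ (tail_filter_FP_from op x 0))).
  intros y (i & l & _ & Hs & ->). apply HA. now exists i, l.
Qed.

Section GalvinGlazer.
Variables (M : Type) (op : M -> M -> M) (U : set_system M).
Hypothesis Hassoc : associative op.
Hypothesis HU : is_ultrafilter U.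
Hypothesis Hnp : ~ is_principal U.
Hypothesis Hidem : idempotent_uf op U.
Hypothesis HM : inhabited M.

Definition star (C : M -> Prop) : M -> Prop :=
  fun y => C y /\ U (fun z => C (op y z)).

Lemma star_in_uf C : U C -> U (star C).
Proof. intros HC. apply (uf_and HU HC). rewrite <- Hidem in HC. exact HC. Qed.

Lemma star_shift C y : star C y -> U (fun z => star C (op y z)).
Proof.
  intros [_ Hy]. apply (uf_mono HU (star_in_uf Hy)). intros z [h1 h2]. split; [exact h1|].
  apply (uf_mono HU h2). intros w hw. now rewrite <- Hassoc.
Qed.

Definition pick (C : M -> Prop) (L : list M) : M :=
  epsilon HM (fun y => star C y /\ ~ In y L).

Lemma pick_spec C L : U C -> star C (pick C L) /\ ~ In (pick C L) L.
Proof.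
  intros HC. apply (epsilon_spec HM (fun y => star C y /\ ~ In y L)).
  exact (uf_nonempty HU (uf_avoid_list HU L Hnp (star_in_uf HC))).
Qed.

(* Stage [n] is the pair ([C_n], [x_(n-1); ...; x_0]). *)
Fixpoint stage (A : M -> Prop) (n : nat) : (M -> Prop) * list M :=
  match n with
  | 0 => (A, [])
  | S n =>
      let (C, L) := stage A n in
      let y := pick C L in
      ((fun z => star C z /\ star C (op y z)), y :: L)
  end.

Definition gg_set (A : M -> Prop) (n : nat) : M -> Prop := fst (stage A n).

Definition gg_seq (A : M -> Prop) (n : nat) : M := pick (gg_set A n) (snd (stage A n)).

Variable A : M -> Prop.
Hypothesis HA : U A.

Lemma stage_S n :
  stage A (S n) =
  ((fun z => star (gg_set A n) z /\ star (gg_set A n) (op (gg_seq A n) z)),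
   gg_seq A n :: snd (stage A n)).
Proof. unfold gg_seq, gg_set. simpl. now destruct (stage A n). Qed.

Lemma gg_set_in_uf n : U (gg_set A n).
Proof.
  induction n as [|n IH]; [exact HA|].
  unfold gg_set at 1. rewrite stage_S. simpl.
  apply (uf_and HU (star_in_uf IH)), star_shift, (pick_spec _ IH).
Qed.

Lemma gg_seq_star n : star (gg_set A n) (gg_seq A n).
Proof. apply pick_spec, gg_set_in_uf. Qed.

Lemma gg_seq_injective n m : gg_seq A n = gg_seq A m -> n = m.
Proof.
  assert (Hin : forall i j, i < j -> In (gg_seq A i) (snd (stage A j))).
  { intros i j. induction j as [|j IH]; intro ij; [lia|].
    rewrite stage_S. destruct (Nat.eq_dec i j) as [->|ne]; [now left|right; apply IH; lia]. }
  assert (Hfresh : forall j, ~ In (gg_seq A j) (snd (stage A j)))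
    by (intro j; apply pick_spec, gg_set_in_uf).
  intros E. destruct (Nat.lt_total n m) as [h|[h|h]]; [|exact h|].
  - destruct (Hfresh m). rewrite <- E. now apply Hin.
  - destruct (Hfresh n). rewrite E. now apply Hin.
Qed.

Lemma gg_set_antitone i j : i <= j -> forall z, gg_set A j z -> gg_set A i z.
Proof.
  induction 1 as [|j _ IH]; [auto|]. intros z hz. apply IH.
  unfold gg_set in hz. rewrite stage_S in hz. exact (proj1 (proj1 hz)).
Qed.

Lemma gg_FP_star i l :
  Sorted lt (i :: l) -> star (gg_set A i) (Defs.list_prod op (gg_seq A) i l).
Proof.
  revert i. induction l as [|j l IH]; intros i Hs; [exact (gg_seq_star i)|].
  apply Sorted_inv in Hs as [Hs Hij]. apply HdRel_inv in Hij.
  change (j :: l) with ([] ++ j :: l). rewrite (list_prod_app _ Hassoc).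
  assert (Hj : gg_set A (S i) (Defs.list_prod op (gg_seq A) j l)).
  { apply (gg_set_antitone Hij). exact (proj1 (IH j Hs)). }
  unfold gg_set in Hj. rewrite stage_S in Hj. exact (proj2 Hj).
Qed.

End GalvinGlazer.

Lemma idempotent_ultrafilter_DIP (M : Type) (op : M -> M -> M) (A : M -> Prop) :
  associative op ->
  (exists U, is_ultrafilter U /\ ~ is_principal U /\ idempotent_uf op U /\ U A) ->
  DIP op A.
Proof.
  intros Hassoc [U (HU & Hnp & Hidem & HA)].
  destruct (uf_nonempty HU HA) as [a _]. set (HM := inhabits a).
  exists (gg_seq op U HM A). split.
  - exact (gg_seq_injective Hassoc HU Hnp Hidem HA).
  - intros y (i & l & Hs & ->).
    apply (gg_set_antitone (op := op) (U := U) (HM := HM) (le_0_n i)).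
    exact (proj1 (gg_FP_star Hassoc HU Hnp Hidem HM HA Hs)).
Qed.

Theorem mainTheorem2 (M : Type) (op : M -> M -> M)
  (Hassoc : associative op) (Hmov : moving op) (A : M -> Prop) :
  DIP op A <->
  exists U : (M -> Prop) -> Prop,
    is_ultrafilter U /\ ~ is_principal U /\ idempotent_uf op U /\ U A.
Proof.
  split; [exact (DIP_idempotent_ultrafilter Hassoc Hmov)|exact (idempotent_ultrafilter_DIP Hassoc)].
Qed.
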